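(* Let $\mathcal{T}$ be a simplicial tree, $G \leq \mathrm{Aut}(\mathcal{T})$, and let $g_1, g_2, g_3 \in G$ be supported in pairwise disjoint half-trees. Then for every $g \in G$, at least one of the following holds: (1) $[g_1^g, g_1] = 1$ or $[g_2^g, g_2] = 1$ or $[g_3^g, g_3] = 1$; (2) $[g_1^g, g_2] = [g_1^g, g_3] = [g_2^g, g_1] = [g_2^g, g_3] = [g_3^g, g_1] = [g_3^g, g_2] = 1$. In particular, for every $g \in G$ there exist $i, j \in \{1,2,3\}$ such that $[g_i^g, g_j] = 1$.
   Context: If $e$ is an edge of $\mathcal{T}$ and $v$ a vertex of $e$, the half-tree determined by $(e,v)$ is the subtree spanned by the vertices whose projection onto $e$ equals $v$. An element is supported in a half-tree $A$ if it fixes pointwise the complement of $A$. Notation: $h^g = g h g^{-1}$ and $[g,h] = g h g^{-1} h^{-1}$. *)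

From Stdlib Require Import List.
Import ListNotations.
Set Implicit Arguments.

Section Trees.
Variable V : Type.
Variable adj : V -> V -> Prop.

Fixpoint is_walk (l : list V) : Prop :=
  match l with
  | a :: ((b :: _) as t) => adj a b /\ is_walk t
  | _ => True
  end.

Fixpoint no_backtrack (l : list V) : Prop :=
  match l with
  | a :: ((b :: c :: _) as t) => a <> c /\ no_backtrack t
  | _ => True
  end.

Definition reduced_path (x y : V) (l : list V) : Prop :=
  hd_error l = Some x /\ last l x = y /\ is_walk l /\ no_backtrack l.

(* simplicial tree: simple graph in which any two vertices are joined by a
   unique reduced path (i.e. connected and without cycles) *)
Definition is_tree : Prop :=
  (forall x y, adj x y -> adj y x) /\ (forall x, ~ adj x x) /\
  (forall x y, exists! l, reduced_path x y l).

(* half-tree determined by the edge e = {u,v} and its vertex v: vertices x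
   whose projection onto e is v, i.e. the geodesic from x to u passes through v *)
Definition halftree (u v : V) (x : V) : Prop :=
  exists l, reduced_path x u l /\ In v l.

Record aut := Aut {
  fwd : V -> V;
  bwd : V -> V;
  fwd_bwd : forall x, fwd (bwd x) = x;
  bwd_fwd : forall x, bwd (fwd x) = x;
  fwd_adj : forall x y, adj x y <-> adj (fwd x) (fwd y)
}.

Lemma bwd_adj_aux (f : aut) x y : adj x y <-> adj (bwd f x) (bwd f y).
Proof. pose proof (fwd_adj f (bwd f x) (bwd f y)) as H. rewrite !fwd_bwd in H. tauto. Qed.

Definition aut_id : aut :=
  @Aut (fun x => x) (fun x => x) (fun _ => eq_refl) (fun _ => eq_refl)
       (fun _ _ => iff_refl _).

Definition aut_mul (g h : aut) : aut.
Proof.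
  refine (@Aut (fun x => fwd g (fwd h x)) (fun x => bwd h (bwd g x)) _ _ _).
  - intro x. rewrite fwd_bwd, fwd_bwd. reflexivity.
  - intro x. rewrite bwd_fwd, bwd_fwd. reflexivity.
  - intros x y. rewrite (fwd_adj h), (fwd_adj g). tauto.
Defined.

Definition aut_inv (g : aut) : aut :=
  @Aut (bwd g) (fwd g) (bwd_fwd g) (fwd_bwd g) (bwd_adj_aux g).

Definition aut_eq (g h : aut) : Prop := forall x, fwd g x = fwd h x.

Definition is_trivial (g : aut) : Prop := aut_eq g aut_id.

(* h^g = g h g^-1 *)
Definition conjg (g h : aut) : aut := aut_mul g (aut_mul h (aut_inv g)).

Definition commg (g h : aut) : aut :=
  aut_mul g (aut_mul h (aut_mul (aut_inv g) (aut_inv h))).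

Definition supported_in (g : aut) (A : V -> Prop) : Prop :=
  forall x, ~ A x -> fwd g x = x.

Definition is_subgroup (G : aut -> Prop) : Prop :=
  G aut_id /\ (forall g h, G g -> G h -> G (aut_mul g h)) /\
  (forall g, G g -> G (aut_inv g)).

Definition disjoint (A B : V -> Prop) : Prop := forall x, ~ (A x /\ B x).

End Trees.

(* Two half-trees of a tree are nested, disjoint, or together cover the tree,
   so the four regions A ∩ B, B \ A, A \ B and the complement of A ∪ B are
   never all inhabited.  If g A_i misses A_i, then g_i^g and g_i have disjoint
   supports and commute.  Otherwise each A_k meets g A_k, and a point of
   g A_i ∩ A_j (i <> j) would, together with points of A_i ∩ g A_i,
   A_j ∩ g A_j and A_k ∩ g A_k, inhabit all four regions of A_j and the
   half-tree g A_i; so g A_i and A_j are disjoint and g_i^g commutes with g_j. *)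

From Stdlib Require Import List Classical.
Import ListNotations.
Set Implicit Arguments.
Unset Strict Implicit.

Lemma last_default_irrelevant (A : Type) (l : list A) d1 d2 :
  l <> [] -> last l d1 = last l d2.
Proof.
  induction l as [|a l IH]; intros Hl; [congruence|].
  destruct l as [|b l]; [reflexivity|].
  apply IH. discriminate.
Qed.

Lemma last_map (A B : Type) (f : A -> B) (l : list A) d :
  last (map f l) (f d) = f (last l d).
Proof.
  induction l as [|a l IH]; [reflexivity|].
  destruct l as [|b l]; [reflexivity | exact IH].
Qed.

Lemma disjoint_sym (V : Type) (A B : V -> Prop) : disjoint A B -> disjoint B A.
Proof. intros D x [HB HA]. exact (D x (conj HA HB)). Qed.

Section ReducedPaths.
Variable V : Type.
Variable adj : V -> V -> Prop.

Lemma reduced_path_head x t l : reduced_path adj x t l -> exists r, l = x :: r.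
Proof.
  intros [Hhd _]. destruct l as [|a r]; [discriminate|].
  injection Hhd as ->. exists r. reflexivity.
Qed.

Lemma reduced_path_cons x y t l :
  reduced_path adj x t (x :: y :: l) -> adj x y /\ reduced_path adj y t (y :: l).
Proof.
  intros [_ [Hlast [[Hxy Hwalk] Hnb]]].
  split; [exact Hxy|]. split; [reflexivity|]. split; [|split; [exact Hwalk|]].
  - rewrite <- Hlast. change (last (y :: l) y = last (y :: l) x).
    apply last_default_irrelevant. discriminate.
  - destruct l as [|z l]; simpl in *; tauto.
Qed.

Lemma reduced_path_extend a b t r :
  adj b a -> reduced_path adj a t (a :: r) -> hd_error r <> Some b ->
  reduced_path adj b t (b :: a :: r).
Proof.
  intros Hba [_ [Hlast [Hwalk Hnb]]] Hhd.
  split; [reflexivity|]. split; [|split; [split; assumption|]].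
  - rewrite <- Hlast. change (last (a :: r) b = last (a :: r) a).
    apply last_default_irrelevant. discriminate.
  - destruct r as [|c r]; [exact I|].
    split; [|exact Hnb]. intros ->. apply Hhd. reflexivity.
Qed.

Lemma reduced_path_edge a b : adj a b -> reduced_path adj a b [a; b].
Proof. intros Hab. repeat split. exact Hab. Qed.

End ReducedPaths.

Section HalfTrees.
Variable V : Type.
Variable adj : V -> V -> Prop.
Hypothesis Htree : is_tree adj.

Lemma tree_adj_sym a b : adj a b -> adj b a.
Proof. exact (proj1 Htree a b). Qed.

Lemma reduced_path_exists x y : exists l, reduced_path adj x y l.
Proof. destruct (proj2 (proj2 Htree) x y) as [l [Hl _]]. exists l. exact Hl. Qed.

Lemma reduced_path_unique x y l1 l2 :
  reduced_path adj x y l1 -> reduced_path adj x y l2 -> l1 = l2.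
Proof.
  intros H1 H2. destruct (proj2 (proj2 Htree) x y) as [l [_ Hl]].
  rewrite <- (Hl _ H1). exact (Hl _ H2).
Qed.

Lemma reduced_path_of_adj v u l : adj v u -> reduced_path adj v u (v :: l) -> l = [u].
Proof.
  intros Hvu Hp. injection (reduced_path_unique Hp (reduced_path_edge Hvu)) as E.
  exact E.
Qed.

Lemma reduced_path_adjacent_sources a b t la lb :
  adj a b -> reduced_path adj a t la -> reduced_path adj b t lb ->
  lb = b :: la \/ la = a :: lb.
Proof.
  intros Hab Ha Hb. destruct (reduced_path_head Ha) as [r ->].
  destruct (classic (hd_error r = Some b)) as [Hhd | Hhd].
  - right. destruct r as [|c r]; [discriminate|]. injection Hhd as ->.
    f_equal. exact (reduced_path_unique (proj2 (reduced_path_cons Ha)) Hb).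
  - left. apply (reduced_path_unique Hb).
    exact (reduced_path_extend (tree_adj_sym Hab) Ha Hhd).
Qed.

Lemma halftree_iff_In u v x l :
  reduced_path adj x u l -> (halftree adj u v x <-> In v l).
Proof.
  intros Hl. split.
  - intros [l' [Hl' Hin]]. rewrite (reduced_path_unique Hl Hl'). exact Hin.
  - intros Hin. exists l. split; assumption.
Qed.

Lemma halftree_vertex u v : adj u v -> halftree adj u v v.
Proof.
  intros Huv. exists [v; u].
  split; [exact (reduced_path_edge (tree_adj_sym Huv)) | left; reflexivity].
Qed.

Lemma halftree_adj_iff u v a b :
  adj u v -> adj a b -> ~ (a = u /\ b = v) -> ~ (a = v /\ b = u) ->
  (halftree adj u v a <-> halftree adj u v b).
Proof.
  intros Huv Hab Nuv Nvu.
  destruct (reduced_path_exists a u) as [la Ha].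
  destruct (reduced_path_exists b u) as [lb Hb].
  rewrite (halftree_iff_In v Ha), (halftree_iff_In v Hb).
  destruct (reduced_path_adjacent_sources Hab Ha Hb) as [-> | ->]; simpl.
  - split; [tauto|]. intros [E | Hin]; [exfalso | exact Hin]. subst b.
    rewrite (reduced_path_of_adj (tree_adj_sym Huv) Hb) in Ha.
    destruct Ha as [Hhd _]. injection Hhd as ->. tauto.
  - split; [|tauto]. intros [E | Hin]; [exfalso | exact Hin]. subst a.
    rewrite (reduced_path_of_adj (tree_adj_sym Huv) Ha) in Hb.
    destruct Hb as [Hhd _]. injection Hhd as ->. tauto.
Qed.

Lemma halftree_edge_invariant_const u v (P : V -> Prop) :
  (forall a b, adj a b -> halftree adj u v a -> halftree adj u v b -> (P a <-> P b)) ->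
  forall x, halftree adj u v x -> (P x <-> P v).
Proof.
  intros HP x [l [Hl Hin]]. revert x Hl Hin.
  induction l as [|c l IH]; intros x Hl Hin; [destruct Hin|].
  destruct (reduced_path_head Hl) as [r E]. injection E as Ec El. subst c r.
  destruct Hin as [-> | Hin]; [tauto|].
  destruct l as [|y l]; [destruct Hin|].
  destruct (reduced_path_cons Hl) as [Hxy Hl'].
  rewrite <- (IH y Hl' Hin). apply HP; [exact Hxy | |].
  - exists (x :: y :: l). split; [exact Hl | right; exact Hin].
  - exists (y :: l). split; assumption.
Qed.

Lemma halftree_compl_edge_invariant_const u v (P : V -> Prop) :
  (forall a b, adj a b -> ~ halftree adj u v a -> ~ halftree adj u v b -> (P a <-> P b)) ->
  forall x, ~ halftree adj u v x -> (P x <-> P u).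
Proof.
  intros HP x Hx. destruct (reduced_path_exists x u) as [l Hl]. revert x Hx Hl.
  induction l as [|c l IH]; intros x Hx Hl;
    destruct (reduced_path_head Hl) as [r E]; [discriminate|].
  injection E as Ec El. subst c r.
  destruct l as [|y l].
  - destruct Hl as [_ [Hlast _]]. simpl in Hlast. subst u. tauto.
  - destruct (reduced_path_cons Hl) as [Hxy Hl'].
    assert (Hy : ~ halftree adj u v y).
    { rewrite (halftree_iff_In v Hl'). rewrite (halftree_iff_In v Hl) in Hx.
      simpl in Hx |- *. tauto. }
    rewrite <- (IH y Hy Hl'). apply HP; assumption.
Qed.

Lemma halftree_const_off_halftree u v u' v' :
  adj u' v' -> halftree adj u v u' -> halftree adj u v v' ->
  forall y w, ~ halftree adj u v y -> ~ halftree adj u v w ->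
  (halftree adj u' v' y <-> halftree adj u' v' w).
Proof.
  intros Hu'v' Hu' Hv' y w Hy Hw.
  assert (HP : forall a b, adj a b -> ~ halftree adj u v a -> ~ halftree adj u v b ->
                 (halftree adj u' v' a <-> halftree adj u' v' b)).
  { intros a b Hab Ha _. apply halftree_adj_iff; try assumption;
      intros [-> _]; contradiction. }
  rewrite (halftree_compl_edge_invariant_const HP Hy).
  rewrite (halftree_compl_edge_invariant_const HP Hw). tauto.
Qed.

Lemma halftree_const_on_halftree u v u' v' :
  adj u' v' -> ~ halftree adj u v u' -> ~ halftree adj u v v' ->
  forall x z, halftree adj u v x -> halftree adj u v z ->
  (halftree adj u' v' x <-> halftree adj u' v' z).
Proof.
  intros Hu'v' Hu' Hv' x z Hx Hz.
  assert (HP : forall a b, adj a b -> halftree adj u v a -> halftree adj u v b ->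
                 (halftree adj u' v' a <-> halftree adj u' v' b)).
  { intros a b Hab Ha _. apply halftree_adj_iff; try assumption;
      intros [-> _]; contradiction. }
  rewrite (halftree_edge_invariant_const HP Hx).
  rewrite (halftree_edge_invariant_const HP Hz). tauto.
Qed.

Lemma halftree_compl_sub_opposite u v w :
  adj u v -> ~ halftree adj u v w -> halftree adj v u w.
Proof.
  intros Huv Hw.
  assert (HP : forall a b, adj a b -> ~ halftree adj u v a -> ~ halftree adj u v b ->
                 (halftree adj v u a <-> halftree adj v u b)).
  { intros a b Hab Ha Hb. apply halftree_adj_iff; [exact (tree_adj_sym Huv) | exact Hab | |].
    - intros [-> _]. exact (Ha (halftree_vertex Huv)).
    - intros [_ ->]. exact (Hb (halftree_vertex Huv)). }
  rewrite (halftree_compl_edge_invariant_const HP Hw).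
  exact (halftree_vertex (tree_adj_sym Huv)).
Qed.

Lemma halftrees_not_transverse u v u' v' x y z w :
  adj u v -> adj u' v' ->
  halftree adj u v x -> halftree adj u' v' x ->
  ~ halftree adj u v y -> halftree adj u' v' y ->
  halftree adj u v z -> ~ halftree adj u' v' z ->
  ~ halftree adj u v w -> ~ halftree adj u' v' w -> False.
Proof.
  intros Huv Hu'v' Hx Hx' Hy Hy' Hz Hz' Hw Hw'.
  destruct (classic (u' = u /\ v' = v)) as [[-> ->] | Nuv]; [contradiction|].
  destruct (classic (u' = v /\ v' = u)) as [[-> ->] | Nvu].
  { exact (Hw' (halftree_compl_sub_opposite Huv Hw)). }
  assert (Hends : halftree adj u v u' <-> halftree adj u v v')
    by (apply halftree_adj_iff; assumption).
  destruct (classic (halftree adj u v u')) as [Hu' | Hu'].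
  - pose proof (halftree_const_off_halftree Hu'v' Hu' (proj1 Hends Hu') Hy Hw). tauto.
  - assert (Hv' : ~ halftree adj u v v') by tauto.
    pose proof (halftree_const_on_halftree Hu'v' Hu' Hv' Hx Hz). tauto.
Qed.

End HalfTrees.

Section Automorphisms.
Variable V : Type.
Variable adj : V -> V -> Prop.

Definition aut_image (g : aut adj) (A : V -> Prop) : V -> Prop := fun y => A (bwd g y).

Lemma is_walk_map (f : V -> V) :
  (forall a b, adj a b -> adj (f a) (f b)) ->
  forall l, is_walk adj l -> is_walk adj (map f l).
Proof.
  intros Hf. induction l as [|a l IH]; [trivial|].
  destruct l as [|b l]; [trivial|].
  intros [Hab Hl]. split; [exact (Hf a b Hab) | exact (IH Hl)].
Qed.

Lemma no_backtrack_map (f : V -> V) :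
  (forall a b, f a = f b -> a = b) ->
  forall l, no_backtrack l -> no_backtrack (map f l).
Proof.
  intros Hf. induction l as [|a l IH]; [trivial|].
  destruct l as [|b [|c l]]; [trivial | trivial |].
  intros [Hac Hl]. split; [intros E; exact (Hac (Hf a c E)) | exact (IH Hl)].
Qed.

Lemma reduced_path_aut (g : aut adj) x y l :
  reduced_path adj x y l -> reduced_path adj (fwd g x) (fwd g y) (map (fwd g) l).
Proof.
  intros [Hhd [Hlast [Hwalk Hnb]]]. split; [|split; [|split]].
  - destruct l as [|a l]; [discriminate|]. injection Hhd as ->. reflexivity.
  - rewrite last_map. congruence.
  - apply is_walk_map; [intros a b; apply (fwd_adj g) | exact Hwalk].
  - apply no_backtrack_map; [|exact Hnb].
    intros a b E. rewrite <- (bwd_fwd g a), E. apply bwd_fwd.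
Qed.

Lemma halftree_aut (g : aut adj) u v x :
  halftree adj u v x -> halftree adj (fwd g u) (fwd g v) (fwd g x).
Proof.
  intros [l [Hl Hin]]. exists (map (fwd g) l).
  split; [exact (reduced_path_aut g Hl) | exact (in_map _ _ _ Hin)].
Qed.

Lemma aut_image_halftree (g : aut adj) u v y :
  aut_image g (halftree adj u v) y <-> halftree adj (fwd g u) (fwd g v) y.
Proof.
  split; intros H.
  - rewrite <- (fwd_bwd g y). exact (halftree_aut g H).
  - pose proof (halftree_aut (aut_inv g) H) as H'. simpl in H'.
    rewrite !bwd_fwd in H'. exact H'.
Qed.

Lemma supported_in_stable (f : aut adj) A x : supported_in f A -> A x -> A (fwd f x).
Proof.
  intros Hs Hx. apply NNPP. intros Hfx.
  assert (Efx : fwd f (fwd f x) = fwd f x) by exact (Hs _ Hfx).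
  apply Hfx. replace (fwd f x) with x; [exact Hx|].
  rewrite <- (bwd_fwd f (fwd f x)), Efx. symmetry. apply bwd_fwd.
Qed.

Lemma supported_disjoint_commute (f h : aut adj) A B :
  supported_in f A -> supported_in h B -> disjoint A B ->
  forall z, fwd f (fwd h z) = fwd h (fwd f z).
Proof.
  intros Hf Hh D z. destruct (classic (A z)) as [Az | Az].
  - assert (Bz : ~ B z) by (intros Bz; exact (D z (conj Az Bz))).
    assert (Bfz : ~ B (fwd f z))
      by (intros Bfz; exact (D _ (conj (supported_in_stable Hf Az) Bfz))).
    rewrite (Hh z Bz), (Hh _ Bfz). reflexivity.
  - rewrite (Hf z Az). destruct (classic (B z)) as [Bz | Bz].
    + apply Hf. intros Ahz. exact (D _ (conj Ahz (supported_in_stable Hh Bz))).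
    + rewrite (Hh z Bz). exact (Hf z Az).
Qed.

Lemma commg_trivial_of_commute (f h : aut adj) :
  (forall z, fwd f (fwd h z) = fwd h (fwd f z)) -> is_trivial (commg f h).
Proof. intros C x. simpl. rewrite C, !fwd_bwd. reflexivity. Qed.

Lemma conjg_supported_in (g h : aut adj) A :
  supported_in h A -> supported_in (conjg g h) (aut_image g A).
Proof. intros Hs y Hy. simpl. rewrite (Hs _ Hy). apply fwd_bwd. Qed.

Lemma commg_conjg_trivial (g a b : aut adj) A B :
  supported_in a A -> supported_in b B -> disjoint (aut_image g A) B ->
  is_trivial (commg (conjg g a) b).
Proof.
  intros Ha Hb D. apply commg_trivial_of_commute.
  exact (supported_disjoint_commute (conjg_supported_in (g := g) Ha) Hb D).
Qed.

End Automorphisms.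

Section ConjugatedHalfTrees.
Variable V : Type.
Variable adj : V -> V -> Prop.
Hypothesis Htree : is_tree adj.
Variable g : aut adj.

Lemma aut_image_halftree_disjoint ui vi uj vj uk vk :
  adj ui vi -> adj uj vj ->
  disjoint (halftree adj ui vi) (halftree adj uj vj) ->
  disjoint (halftree adj ui vi) (halftree adj uk vk) ->
  disjoint (halftree adj uj vj) (halftree adj uk vk) ->
  ~ disjoint (aut_image g (halftree adj ui vi)) (halftree adj ui vi) ->
  ~ disjoint (aut_image g (halftree adj uj vj)) (halftree adj uj vj) ->
  ~ disjoint (aut_image g (halftree adj uk vk)) (halftree adj uk vk) ->
  disjoint (aut_image g (halftree adj ui vi)) (halftree adj uj vj).
Proof.
  intros Hei Hej Dij Dik Djk Ni Nj Nk x [Hgx Hx].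
  apply Ni. intros y [Hgy Hy]. apply Nj. intros z [Hgz Hz]. apply Nk. intros w [Hgw Hw].
  assert (Hgei : adj (fwd g ui) (fwd g vi)) by exact (proj1 (fwd_adj g ui vi) Hei).
  apply (halftrees_not_transverse Htree Hej Hgei (x := x) (y := y) (z := z) (w := w));
    rewrite <- ?aut_image_halftree; unfold aut_image in *.
  - exact Hx.
  - exact Hgx.
  - intros Hy'. exact (Dij y (conj Hy Hy')).
  - exact Hgy.
  - exact Hz.
  - intros Hgz'. exact (Dij _ (conj Hgz' Hgz)).
  - intros Hw'. exact (Djk w (conj Hw' Hw)).
  - intros Hgw'. exact (Dik _ (conj Hgw' Hgw)).
Qed.

Lemma commg_conjg_dichotomy (g1 g2 g3 : aut adj) u1 v1 u2 v2 u3 v3 :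
  adj u1 v1 -> adj u2 v2 -> adj u3 v3 ->
  disjoint (halftree adj u1 v1) (halftree adj u2 v2) ->
  disjoint (halftree adj u1 v1) (halftree adj u3 v3) ->
  disjoint (halftree adj u2 v2) (halftree adj u3 v3) ->
  supported_in g1 (halftree adj u1 v1) ->
  supported_in g2 (halftree adj u2 v2) ->
  supported_in g3 (halftree adj u3 v3) ->
  (is_trivial (commg (conjg g g1) g1) \/
   is_trivial (commg (conjg g g2) g2) \/
   is_trivial (commg (conjg g g3) g3)) \/
  (is_trivial (commg (conjg g g1) g2) /\ is_trivial (commg (conjg g g1) g3) /\
   is_trivial (commg (conjg g g2) g1) /\ is_trivial (commg (conjg g g2) g3) /\
   is_trivial (commg (conjg g g3) g1) /\ is_trivial (commg (conjg g g3) g2)).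
Proof.
  intros He1 He2 He3 D12 D13 D23 Hs1 Hs2 Hs3.
  set (A1 := halftree adj u1 v1) in *.
  set (A2 := halftree adj u2 v2) in *.
  set (A3 := halftree adj u3 v3) in *.
  destruct (classic (disjoint (aut_image g A1) A1)) as [N1 | N1];
    [left; left; exact (commg_conjg_trivial Hs1 Hs1 N1)|].
  destruct (classic (disjoint (aut_image g A2) A2)) as [N2 | N2];
    [left; right; left; exact (commg_conjg_trivial Hs2 Hs2 N2)|].
  destruct (classic (disjoint (aut_image g A3) A3)) as [N3 | N3];
    [left; right; right; exact (commg_conjg_trivial Hs3 Hs3 N3)|].
  pose proof (disjoint_sym D12) as D21.
  pose proof (disjoint_sym D13) as D31.
  pose proof (disjoint_sym D23) as D32.
  right. repeat split.
  - exact (commg_conjg_trivial Hs1 Hs2 (aut_image_halftree_disjoint He1 He2 D12 D13 D23 N1 N2 N3)).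
  - exact (commg_conjg_trivial Hs1 Hs3 (aut_image_halftree_disjoint He1 He3 D13 D12 D32 N1 N3 N2)).
  - exact (commg_conjg_trivial Hs2 Hs1 (aut_image_halftree_disjoint He2 He1 D21 D23 D13 N2 N1 N3)).
  - exact (commg_conjg_trivial Hs2 Hs3 (aut_image_halftree_disjoint He2 He3 D23 D21 D31 N2 N3 N1)).
  - exact (commg_conjg_trivial Hs3 Hs1 (aut_image_halftree_disjoint He3 He1 D31 D32 D12 N3 N1 N2)).
  - exact (commg_conjg_trivial Hs3 Hs2 (aut_image_halftree_disjoint He3 He2 D32 D31 D21 N3 N2 N1)).
Qed.

End ConjugatedHalfTrees.

Theorem lemma3p6 (V : Type) (adj : V -> V -> Prop) (Htree : is_tree adj)
  (G : aut adj -> Prop) (HG : is_subgroup G)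
  (g1 g2 g3 : aut adj) (H1 : G g1) (H2 : G g2) (H3 : G g3)
  (u1 v1 u2 v2 u3 v3 : V)
  (He1 : adj u1 v1) (He2 : adj u2 v2) (He3 : adj u3 v3)
  (Hd12 : disjoint (halftree adj u1 v1) (halftree adj u2 v2))
  (Hd13 : disjoint (halftree adj u1 v1) (halftree adj u3 v3))
  (Hd23 : disjoint (halftree adj u2 v2) (halftree adj u3 v3))
  (Hs1 : supported_in g1 (halftree adj u1 v1))
  (Hs2 : supported_in g2 (halftree adj u2 v2))
  (Hs3 : supported_in g3 (halftree adj u3 v3)) :
  forall g : aut adj, G g ->
    ((is_trivial (commg (conjg g g1) g1) \/
      is_trivial (commg (conjg g g2) g2) \/
      is_trivial (commg (conjg g g3) g3)) \/
     (is_trivial (commg (conjg g g1) g2) /\ is_trivial (commg (conjg g g1) g3) /\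
      is_trivial (commg (conjg g g2) g1) /\ is_trivial (commg (conjg g g2) g3) /\
      is_trivial (commg (conjg g g3) g1) /\ is_trivial (commg (conjg g g3) g2)))
    /\
    (exists a b : aut adj,
      (a = g1 \/ a = g2 \/ a = g3) /\ (b = g1 \/ b = g2 \/ b = g3) /\
      is_trivial (commg (conjg g a) b)).
Proof.
  intros g _.
  pose proof (commg_conjg_dichotomy Htree g He1 He2 He3 Hd12 Hd13 Hd23 Hs1 Hs2 Hs3) as Hdich.
  split; [exact Hdich|].
  destruct Hdich as [[Hc | [Hc | Hc]] | [Hc _]].
  - exists g1, g1. auto.
  - exists g2, g2. auto.
  - exists g3, g3. auto.
  - exists g1, g2. auto.
Qed.
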